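(* Let $n\geq 2$ and let $c_0:V(K_n)\to\mathbb{Z}$ be any initial chip configuration on the complete graph $K_n$. Then the sequence of configurations $(c_t)_{t\ge0}$ produced by the diffusion process is eventually periodic, i.e. there exist $t\geq 0$ and $p\geq 1$ with $c_{t+p}=c_t$.
   Context: Diffusion process: for a finite simple graph $G$ and a chip configuration $c_t:V(G)\to\mathbb{Z}$ (negative values allowed), the next configuration is defined simultaneously for every vertex $u$ by $c_{t+1}(u)=c_t(u)-|\{w\in N(u): c_t(u)>c_t(w)\}|+|\{w\in N(u): c_t(u)<c_t(w)\}|$. *)

From mathcomp Require Import all_boot all_order all_algebra.
Set Implicit Arguments. Unset Strict Implicit. Unset Printing Implicit Defensive.
Import Order.TTheory GRing.Theory Num.Theory.
Local Open Scope ring_scope.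

Definition simple_graph (T : finType) (e : rel T) : Prop :=
  symmetric e /\ irreflexive e.

Definition complete_graph (n : nat) : rel 'I_n := fun u w => u != w.

Definition diffusion_step (T : finType) (e : rel T) (c : T -> int) : T -> int :=
  fun u => c u - (#|[pred w | e u w && (c w < c u)]| : int)
               + (#|[pred w | e u w && (c u < c w)]| : int).

Definition diffusion (T : finType) (e : rel T) (c0 : T -> int) (t : nat) : T -> int :=
  iter t (diffusion_step e) c0.

(* Chips move along edges, so the total is invariant.  On K_n, if c v <= c u
   then u has at least as many lower and at most as many higher neighbours as
   v, so the gap c u - c v cannot widen, while a reversed pair ends up at most
   2n apart; hence the spread stays below max (spread c_0, 2n).  Bounded
   spread and fixed total confine every c_t to a finite box, and a
   deterministic orbit in a finite set repeats, hence is eventually periodic. *)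

From mathcomp Require Import all_boot all_order all_algebra zify.
From Stdlib Require Import FunctionalExtensionality.
Set Implicit Arguments. Unset Strict Implicit. Unset Printing Implicit Defensive.
Import Order.TTheory GRing.Theory Num.Theory.
Local Open Scope ring_scope.

Section Diffusion.

Variables (T : finType) (e : rel T).

Definition lower_degree (c : T -> int) (u : T) : nat :=
  #|[pred w | e u w && (c w < c u)]|.

Definition upper_degree (c : T -> int) (u : T) : nat :=
  #|[pred w | e u w && (c u < c w)]|.

Lemma diffusion_stepE c u :
  diffusion_step e c u = c u - (lower_degree c u)%:Z + (upper_degree c u)%:Z.
Proof. by []. Qed.

Lemma diffusionS c0 t : diffusion e c0 t.+1 = diffusion_step e (diffusion e c0 t).
Proof. by []. Qed.

Lemma upper_degree_opp c u : upper_degree c u = lower_degree (fun x => - c x) u.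
Proof. by apply: eq_card => w; rewrite !inE ltrN2. Qed.

Lemma lower_degree_le_card c u : (lower_degree c u <= #|T|)%N.
Proof. exact: max_card. Qed.

Lemma upper_degree_le_card c u : (upper_degree c u <= #|T|)%N.
Proof. exact: max_card. Qed.

Hypothesis e_sym : symmetric e.

Lemma sum_lower_degree c : (\sum_u lower_degree c u = \sum_u upper_degree c u)%N.
Proof.
have card_sum (P : T -> bool) : #|[pred w | P w]| = (\sum_w P w)%N.
  by rewrite -sum1_card big_mkcond; apply: eq_bigr => w _; rewrite inE; case: (P w).
rewrite /lower_degree /upper_degree.
under eq_bigr do rewrite card_sum.
under [RHS]eq_bigr do rewrite card_sum.
by rewrite exchange_big; apply: eq_bigr => u _; apply: eq_bigr => w _; rewrite /= e_sym.
Qed.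

Lemma sum_diffusion_step c : \sum_u diffusion_step e c u = \sum_u c u.
Proof.
under eq_bigr do rewrite diffusion_stepE.
rewrite !big_split sumrN /= -!(big_morph Posz PoszD (erefl 0%:Z)).
by rewrite sum_lower_degree addrNK.
Qed.

Lemma sum_diffusion c0 t : \sum_u diffusion e c0 t u = \sum_u c0 u.
Proof. by elim: t => [//|t IHt]; rewrite diffusionS sum_diffusion_step. Qed.

End Diffusion.

Lemma norm_le_of_spread (T : finType) (x : T -> int) (B : int) :
  (forall u v, x u - x v <= B) ->
  forall u, `|x u| <= `|\sum_w x w| + #|T|%:Z * B.
Proof.
move=> spread_x u; set N := #|T|%:Z; set S := \sum_w x w.
have sum_const_int (y : int) : \sum_(w : T) y = N * y.
  by rewrite sumr_const -mulr_natl natz.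
have up : N * x u - S <= N * B.
  by rewrite -sum_const_int -sumrB -sum_const_int; apply: ler_sum => w _.
have down : S - N * x u <= N * B.
  by rewrite -sum_const_int -sumrB -sum_const_int; apply: ler_sum => w _.
have N_ge1 : 1 <= N by rewrite lez_nat; apply/card_gt0P; exists u.
have : `|x u| <= `|N * x u| by rewrite normrM ler_peMl // ger0_norm // (le_trans _ N_ge1).
have := ler_normD (N * x u - S) S; rewrite subrK.
have : `|N * x u - S| <= N * B by rewrite ler_norml up andbT lerNl opprB.
lia.
Qed.

Section CompleteGraph.

Variable n : nat.
Notation Kn := (@complete_graph n).

Lemma complete_graph_sym : symmetric Kn.
Proof. by move=> u v; rewrite /complete_graph eq_sym. Qed.

Lemma complete_lower_degree_homo (c : 'I_n -> int) u v :
  c v <= c u -> (lower_degree Kn c v <= lower_degree Kn c u)%N.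
Proof.
move=> le_vu; apply: subset_leq_card; apply/subsetP => w.
rewrite !inE /complete_graph => /andP[_ lt_wv].
have lt_wu := lt_le_trans lt_wv le_vu.
by rewrite lt_wu andbT; apply: contraTneq lt_wu => ->; rewrite ltxx.
Qed.

Lemma complete_upper_degree_homo (c : 'I_n -> int) u v :
  c v <= c u -> (upper_degree Kn c u <= upper_degree Kn c v)%N.
Proof. by rewrite !upper_degree_opp -lerN2; apply: complete_lower_degree_homo. Qed.

Lemma diffusion_step_spread (c : 'I_n -> int) (B : int) :
  (2 * n)%:Z <= B -> (forall u v, c u - c v <= B) ->
  forall u v, diffusion_step Kn c u - diffusion_step Kn c v <= B.
Proof.
move=> le_2n_B spread_c u v; rewrite !diffusion_stepE.
have lower_le x : (lower_degree Kn c x <= n)%N.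
  by have := lower_degree_le_card Kn c x; rewrite card_ord.
have upper_le x : (upper_degree Kn c x <= n)%N.
  by have := upper_degree_le_card Kn c x; rewrite card_ord.
have := spread_c u v; have := lower_le u; have := lower_le v.
have := upper_le u; have := upper_le v.
case: (leP (c v) (c u)) => [le_vu | ]; last lia.
have := complete_lower_degree_homo le_vu; have := complete_upper_degree_homo le_vu.
lia.
Qed.

Lemma diffusion_spread_bounded (c0 : 'I_n -> int) :
  exists B : int, forall t u v, diffusion Kn c0 t u - diffusion Kn c0 t v <= B.
Proof.
pose s := \sum_u `|c0 u|.
have le_s u : `|c0 u| <= s by rewrite /s (bigD1 u) //= lerDl sumr_ge0.
exists ((2 * n)%:Z + 2 * s) => t; elim: t => [|t IHt] u v.
  rewrite /diffusion /=; have := ler_normB (c0 u) (c0 v); have := ler_norm (c0 u - c0 v).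
  have := le_s u; have := le_s v; lia.
apply: diffusion_step_spread IHt u v.
have : 0 <= s by apply: sumr_ge0.
lia.
Qed.

Lemma diffusion_bounded (c0 : 'I_n -> int) :
  exists K : nat, forall t u, `|diffusion Kn c0 t u| <= K%:Z.
Proof.
have [B spread_B] := diffusion_spread_bounded c0.
exists (absz (`|\sum_u c0 u| + n%:Z * B)) => t u.
rewrite abszE; apply: le_trans (ler_norm _).
have := norm_le_of_spread (spread_B t) u.
by rewrite card_ord sum_diffusion //; apply: complete_graph_sym.
Qed.

End CompleteGraph.

Lemma nat_fun_repeat (A : finType) (g : nat -> A) :
  exists i j, (i < j)%N /\ g i = g j.
Proof.
pose h (i : 'I_#|A|.+1) := g i.
have /injectivePn [i [j neq_ij eq_ij]] : ~~ injectiveb h.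
  by apply/injectiveP => /leq_card; rewrite card_ord ltnn.
case: (ltngtP i j) => [lt_ij | lt_ji | /val_inj eq_ij'].
- by exists i, j.
- by exists j, i.
- by rewrite eq_ij' eqxx in neq_ij.
Qed.

Lemma shift_ordK (K : nat) (z : int) :
  `|z| <= K%:Z -> (inord (absz (z + K%:Z)) : 'I_(K.*2).+1)%:Z = z + K%:Z.
Proof. by rewrite ler_norml => /andP[lo hi]; rewrite inordK; lia. Qed.

Lemma bounded_fun_repeat (T : finType) (g : nat -> T -> int) (K : nat) :
  (forall t u, `|g t u| <= K%:Z) -> exists i j, (i < j)%N /\ g i = g j.
Proof.
move=> g_bounded.
pose code t : {ffun T -> 'I_(K.*2).+1} := [ffun u => inord (absz (g t u + K%:Z))].
have [i [j [lt_ij /ffunP eq_code]]] := nat_fun_repeat code.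
exists i, j; split=> //; apply: functional_extensionality => u.
have := eq_code u; rewrite !ffunE => /(congr1 (fun k : 'I__ => k%:Z)).
by rewrite !shift_ordK // => /addIr.
Qed.

Local Close Scope ring_scope.

Theorem theorem12 (n : nat) (hn : (2 <= n)%N) (c0 : 'I_n -> int) :
  exists (t p : nat), (1 <= p)%N /\
    diffusion (@complete_graph n) c0 (t + p) = diffusion (@complete_graph n) c0 t.
Proof.
(* The argument works for every [n]. *)
have [K bounded_K] := diffusion_bounded c0.
have [i [j [lt_ij eq_ij]]] := bounded_fun_repeat bounded_K.
by exists i, (j - i)%N; rewrite subn_gt0 subnKC ?(ltnW lt_ij).
Qed.
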